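(* Let $K$ be a field, $X$ a finite connected poset and $S\subseteq J(I(X,K))$. Then the ideal $\langle S\rangle$ of $I(X,K)$ generated by $S$ coincides with the Lie ideal $\langle S\rangle_L$ of $I(X,K)$ generated by $S$. Consequently, every Lie ideal of $I(X,K)$ contained in $J(I(X,K))$ is an (associative) ideal.
   Context: $I(X,K)$ is the incidence algebra: functions $f:X\times X\to K$ with $f(x,y)=0$ unless $x\le y$, product $(fg)(x,y)=\sum_{x\le t\le y}f(x,t)g(t,y)$, Lie bracket $[f,g]=fg-gf$. $J(I(X,K))=\{f: f(x,x)=0\ \forall x\}$ is the Jacobson radical. Connected means any two elements are joined by a sequence in which consecutive elements are in a covering relation. *)

From HB Require Import structures.
From mathcomp Require Import all_boot all_order all_algebra.
Set Implicit Arguments. Unset Strict Implicit. Unset Printing Implicit Defensive.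
Import Order.TTheory GRing.Theory.

(* Incidence algebra I(X,K) of a finite poset X over a field K.
   Elements are represented as functions X -> X -> K vanishing off the
   order relation. *)
Section Incidence.
Variables (d : Order.disp_t) (X : finPOrderType d) (K : fieldType).

Definition ifun := X -> X -> K.

Definition incidence (f : ifun) : Prop :=
  forall x y : X, ~~ (x <= y)%O -> f x y = 0%R.

Definition jradical (f : ifun) : Prop :=
  incidence f /\ forall x : X, f x x = 0%R.

Definition izero : ifun := fun _ _ => 0%R.
Definition iadd (f g : ifun) : ifun := fun x y => (f x y + g x y)%R.
Definition iscale (c : K) (f : ifun) : ifun := fun x y => (c * f x y)%R.
Definition imul (f g : ifun) : ifun :=
  fun x y => (\sum_(t : X | (x <= t)%O && (t <= y)%O) f x t * g t y)%R.
Definition ibracket (f g : ifun) : ifun :=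
  fun x y => (imul f g x y - imul g f x y)%R.

Definition is_subspace (I : ifun -> Prop) : Prop :=
  [/\ forall f, I f -> incidence f,
      I izero,
      forall f g, I f -> I g -> I (iadd f g)
    & forall c f, I f -> I (iscale c f)].

Definition is_ideal (I : ifun -> Prop) : Prop :=
  is_subspace I /\
  forall f g, I f -> incidence g -> I (imul f g) /\ I (imul g f).

Definition is_lie_ideal (I : ifun -> Prop) : Prop :=
  is_subspace I /\
  forall f g, I f -> incidence g -> I (ibracket f g).

Definition ideal_gen (S : ifun -> Prop) (f : ifun) : Prop :=
  forall I, is_ideal I -> (forall g, S g -> I g) -> I f.

Definition lie_ideal_gen (S : ifun -> Prop) (f : ifun) : Prop :=
  forall I, is_lie_ideal I -> (forall g, S g -> I g) -> I f.

End Incidence.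

Definition covers (d : Order.disp_t) (X : finPOrderType d) (x y : X) : bool :=
  (x < y)%O && [forall z : X, ~~ ((x < z)%O && (z < y)%O)].

Definition connected_poset (d : Order.disp_t) (X : finPOrderType d) : Prop :=
  forall x y : X, exists s : seq X,
    path (fun a b => covers a b || covers b a) x s /\ last x s = y.

From mathcomp Require Import all_boot all_order all_algebra.
From Stdlib Require Import FunctionalExtensionality.
Set Implicit Arguments. Unset Strict Implicit. Unset Printing Implicit Defensive.
Import Order.Theory GRing.Theory.
Local Open Scope ring_scope.

(* Write e_ab for [idelta a b].  For [f] in a Lie ideal [L] contained in the
   radical and [a < b], the double bracket [[f, e_aa], e_bb] = -f(a,b) e_ab puts
   f(a,b) e_ab in [L]; for [b <= c] the bracket [f(a,b) e_ab, e_bc] = f(a,b) e_ac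
   (a <> c as a < b <= c) then puts f(a,b) e_ac in [L].  Hence
   fg = sum f(a,b) g(b,c) e_ac lies in [L], and so does gf = fg - [f,g]: [L] is
   an ideal.  The Lie ideal generated by S inside J stays inside the Lie ideal J,
   so it is an ideal, which gives the equality of the two generated ideals. *)

Section IncidenceAlgebra.
Variables (d : Order.disp_t) (X : finPOrderType d) (K : fieldType).
Implicit Types (f g : ifun X K) (a b c x y : X) (k : K) (I S : ifun X K -> Prop).

Definition idelta a b : ifun X K := fun x y => if (x == a) && (y == b) then 1 else 0.

Lemma ifun_ext f g : (forall x y, f x y = g x y) -> f = g.
Proof. by move=> fg; do 2 apply: functional_extensionality => ?. Qed.

Lemma ibig_apply (J : finType) (P : pred J) (F : J -> ifun X K) x y :
  (\big[@iadd _ X K/@izero _ X K]_(j | P j) F j) x y = \sum_(j | P j) F j x y.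
Proof. exact: (big_morph (fun h : ifun X K => h x y)). Qed.

Lemma sum_if_eq (P : pred X) (F : X -> K) b :
  \sum_(t | P t) (if t == b then F t else 0) = if P b then F b else 0.
Proof.
rewrite -big_mkcondr /=; case: ifP => Pb; last first.
  by rewrite big_pred0 // => t; apply/andP => -[Pt /eqP tb]; rewrite -tb Pt in Pb.
by apply: big_pred1 => t; rewrite /= andb_idl // => /eqP ->.
Qed.

Lemma imul_ideltal a b g x y :
  imul (idelta a b) g x y = if (x == a) && (a <= b)%O && (b <= y)%O then g b y else 0.
Proof.
rewrite /imul /idelta; have [->|_] /= := eqVneq x a; last first.
  by rewrite big1 // => t _; rewrite mul0r.
rewrite -(sum_if_eq (fun t => (a <= t <= y)%O) (g^~ y)); apply: eq_bigr => t _.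
by case: eqP; rewrite ?mul1r ?mul0r.
Qed.

Lemma imul_ideltar a b g x y :
  imul g (idelta a b) x y = if (y == b) && (x <= a)%O && (a <= y)%O then g x a else 0.
Proof.
rewrite /imul /idelta; have [->|_] /= := eqVneq y b; last first.
  by rewrite big1 // => t _; rewrite andbF mulr0.
rewrite -(sum_if_eq (fun t => (x <= t <= b)%O) (g x)); apply: eq_bigr => t _.
by rewrite andbT; case: eqP; rewrite ?mulr1 ?mulr0.
Qed.

Lemma incidence_idelta a b : (a <= b)%O -> incidence (idelta a b).
Proof.
move=> ab x y; rewrite /idelta; case: (x =P a) => [->|] //=.
by case: (y =P b) => [->|] //; rewrite ab.
Qed.

Lemma incidence_imul f g : incidence (imul f g).
Proof.
move=> x y xy; apply: big_pred0 => t.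
by apply/negP => /andP[xt ty]; rewrite (le_trans xt ty) in xy.
Qed.

Lemma ibracket_diag f g x : ibracket f g x x = 0.
Proof.
have xx t : (x <= t <= x)%O = (t == x).
  by apply/idP/eqP => [/le_anti //|->]; rewrite lexx.
rewrite /ibracket /imul !(eq_bigl _ _ xx) !big_pred1_eq.
by rewrite mulrC subrr.
Qed.

Lemma iscale0 f : iscale 0 f = @izero _ X K.
Proof. by apply: ifun_ext => x y; rewrite /iscale mul0r. Qed.

Lemma ibracketZl k f g : ibracket (iscale k f) g = iscale k (ibracket f g).
Proof.
apply: ifun_ext => x y; rewrite /ibracket /imul /iscale mulrBr !mulr_sumr.
by congr (_ - _); apply: eq_bigr => t _; [rewrite mulrA | rewrite mulrCA].
Qed.

Lemma ibracketE f g : ibracket f g = iadd (imul f g) (iscale (-1) (imul g f)).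
Proof. by apply: ifun_ext => x y; rewrite /iadd /iscale mulN1r. Qed.

Lemma imul_swap f g : imul g f = iadd (imul f g) (iscale (-1) (ibracket f g)).
Proof. by apply: ifun_ext => x y; rewrite /iadd /iscale /ibracket mulN1r opprB addrC subrK. Qed.

Lemma ibracket_idelta a b c :
  (a <= b)%O -> (b <= c)%O -> a != c -> ibracket (idelta a b) (idelta b c) = idelta a c.
Proof.
move=> ab bc /negbTE ac; apply: ifun_ext => x y.
rewrite /ibracket !imul_ideltal /idelta [c == a]eq_sym ac eqxx !if_same subr0 ab /=.
by case: (x =P a) => //= _; case: (y =P c) => [->|]; rewrite ?bc ?andbF ?if_same.
Qed.

Lemma ibracket_ibracket_idelta f a b : (a < b)%O ->
  iscale (-1) (ibracket (ibracket f (idelta a a)) (idelta b b)) = iscale (f a b) (idelta a b).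
Proof.
move=> ab; have ba : (b <= a)%O = false by rewrite lt_geF.
have /negbTE b_a : b != a by rewrite gt_eqF.
apply: ifun_ext => x y; rewrite /iscale /ibracket imul_ideltar imul_ideltal /=.
rewrite !imul_ideltar !imul_ideltal (imul_ideltar a a f b y) /idelta.
rewrite b_a ba (ltW ab) !lexx !andbF /= !andbT subrr if_same subr0 sub0r.
have [->|_] := eqVneq x a; have [->|_] := eqVneq y b;
  by rewrite /= ?lexx ?(ltW ab) ?andbF ?mulr0 ?mulr1 ?mulN1r ?opprK ?oppr0 ?if_same ?oppr0.
Qed.

Lemma imul_idelta_decomp f g :
  imul f g = \big[@iadd _ X K/@izero _ X K]_a \big[@iadd _ X K/@izero _ X K]_b
               iscale (f a b) (imul (idelta a b) g).
Proof.
apply: ifun_ext => x y; rewrite ibig_apply (bigD1 x) //= big1 ?addr0 => [|a xa].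
  rewrite ibig_apply [LHS]/imul big_mkcond; apply: eq_bigr => b _.
  by rewrite /iscale imul_ideltal eqxx /=; case: ifP; rewrite ?mulr0.
rewrite ibig_apply big1 // => b _.
by rewrite /iscale imul_ideltal eq_sym (negbTE xa) mulr0.
Qed.

Lemma iscale_imul_idelta_decomp k a b g : (a <= b)%O ->
  iscale k (imul (idelta a b) g) =
  \big[@iadd _ X K/@izero _ X K]_(c | (b <= c)%O) iscale (g b c) (iscale k (idelta a c)).
Proof.
move=> ab; apply: ifun_ext => x y; rewrite ibig_apply /iscale imul_ideltal ab /idelta.
have [_|_] /= := eqVneq x a; last by rewrite mulr0 big1 // => c _; rewrite !mulr0.
transitivity (\sum_(c | (b <= c)%O) (if c == y then k * g b c else 0)).
  by rewrite sum_if_eq; case: ifP; rewrite ?mulr0.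
by apply: eq_bigr => c _; rewrite eq_sym; case: eqP; rewrite ?mulr0 // mulr1 mulrC.
Qed.

Lemma jradical_support f a b : jradical f -> f a b != 0 -> (a < b)%O.
Proof.
case=> If Df fab; rewrite lt_neqAle; apply/andP; split.
  by apply: contraNneq fab => ->; rewrite Df.
by apply: contraNT fab => /If ->.
Qed.

Lemma subspace_big I (J : finType) (P : pred J) (F : J -> ifun X K) :
  is_subspace I -> (forall j, P j -> I (F j)) ->
  I (\big[@iadd _ X K/@izero _ X K]_(j | P j) F j).
Proof. by case=> _ I0 ID _; apply: big_ind. Qed.

Lemma incidence_lie_ideal : is_lie_ideal (@incidence d X K).
Proof.
split; first split.
- by [].
- by [].
- by move=> f g If Ig x y xy; rewrite /iadd If ?Ig ?addr0.
- by move=> k f If x y xy; rewrite /iscale If ?mulr0.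
by move=> f g _ _ x y xy; rewrite /ibracket !incidence_imul ?subr0.
Qed.

Lemma jradical_lie_ideal : is_lie_ideal (@jradical d X K).
Proof.
have [[_ _ ID IZ] Ibr] := incidence_lie_ideal.
split; first split.
- by move=> f [].
- by [].
- by move=> f g [If Df] [Ig Dg]; split=> [|x]; [apply: ID | rewrite /iadd Df Dg addr0].
- by move=> k f [If Df]; split=> [|x]; [apply: IZ | rewrite /iscale Df mulr0].
by move=> f g [If _] Ig; split=> [|x]; [apply: Ibr | apply: ibracket_diag].
Qed.

Lemma ideal_lie_ideal I : is_ideal I -> is_lie_ideal I.
Proof.
move=> [subI Imul]; split=> // f g If Ig; have [_ _ ID IZ] := subI.
have [Ifg Igf] := Imul f g If Ig.
by rewrite ibracketE; apply: ID => //; apply: IZ.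
Qed.

Lemma lie_ideal_gen_lie_ideal S :
  (forall f, S f -> incidence f) -> is_lie_ideal (lie_ideal_gen S).
Proof.
move=> Sinc; split; first split.
- by move=> f; apply; [apply: incidence_lie_ideal | apply: Sinc].
- by move=> I [[]].
- move=> f g Sf Sg I HI SI; have [[_ _ ID _] _] := HI.
  exact: ID (Sf I HI SI) (Sg I HI SI).
- move=> k f Sf I HI SI; have [[_ _ _ IZ] _] := HI.
  exact: IZ (Sf I HI SI).
move=> f g Sf Ig I HI SI; have [_ Ibr] := HI.
exact: Ibr (Sf I HI SI) Ig.
Qed.

Section LieIdealInRadical.
Variable L : ifun X K -> Prop.
Hypotheses (HL : is_lie_ideal L) (LJ : forall f, L f -> jradical f).

Lemma lie_iscale_idelta f a b : L f -> L (iscale (f a b) (idelta a b)).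
Proof.
move=> Lf; have [[_ L0 _ LZ] Lbr] := HL.
have [->|/(jradical_support (LJ Lf)) ab] := eqVneq (f a b) 0; first by rewrite iscale0.
rewrite -ibracket_ibracket_idelta //; apply/LZ/Lbr/incidence_idelta/lexx.
exact/Lbr/incidence_idelta/lexx.
Qed.

Lemma lie_iscale_idelta_trans f a b c : L f -> (b <= c)%O -> L (iscale (f a b) (idelta a c)).
Proof.
move=> Lf bc; have [[_ L0 _ _] Lbr] := HL.
have [->|/(jradical_support (LJ Lf)) ab] := eqVneq (f a b) 0; first by rewrite iscale0.
have ac : a != c by rewrite lt_eqF // (lt_le_trans ab bc).
rewrite -(ibracket_idelta (ltW ab) bc ac) -ibracketZl.
exact/Lbr/incidence_idelta/bc/lie_iscale_idelta.
Qed.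

Lemma lie_imull f g : L f -> L (imul f g).
Proof.
move=> Lf; have [[_ L0 _ LZ] _] := HL.
rewrite imul_idelta_decomp; apply: subspace_big HL.1 _ => a _.
apply: subspace_big HL.1 _ => b _.
have [->|/(jradical_support (LJ Lf))/ltW ab] := eqVneq (f a b) 0; first by rewrite iscale0.
rewrite iscale_imul_idelta_decomp //; apply: subspace_big HL.1 _ => c bc.
exact/LZ/lie_iscale_idelta_trans.
Qed.

Lemma lie_imulr f g : L f -> incidence g -> L (imul g f).
Proof.
move=> Lf Ig; have [[_ _ LD LZ] Lbr] := HL.
by rewrite imul_swap; apply/LD/LZ/Lbr; [apply: lie_imull | |].
Qed.

Lemma lie_ideal_radical_ideal : is_ideal L.
Proof. by split=> [|f g Lf Ig]; [case: HL | split; [apply: lie_imull | apply: lie_imulr]]. Qed.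

End LieIdealInRadical.

Lemma ideal_gen_lie_ideal_gen S : (forall f, S f -> jradical f) ->
  forall f, ideal_gen S f <-> lie_ideal_gen S f.
Proof.
move=> SJ f; split=> [Sf | Sf I /ideal_lie_ideal HI SI]; last exact: Sf.
apply: Sf => [|g Sg I _ SI]; last exact: SI.
apply: lie_ideal_radical_ideal => [|g Sg].
  by apply: lie_ideal_gen_lie_ideal => g /SJ [].
exact: Sg (jradical_lie_ideal) SJ.
Qed.

End IncidenceAlgebra.

Theorem corollary3p5 (d : Order.disp_t) (X : finPOrderType d) (K : fieldType) :
  connected_poset X ->
  (forall S : ifun X K -> Prop,
     (forall f, S f -> jradical f) ->
     forall f, ideal_gen S f <-> lie_ideal_gen S f) /\
  (forall L : ifun X K -> Prop,
     is_lie_ideal L -> (forall f, L f -> jradical f) -> is_ideal L).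
Proof.
move=> _; split; [exact: ideal_gen_lie_ideal_gen | exact: lie_ideal_radical_ideal].
Qed.
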